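(* Let $\mathcal D$ be a clone $\tau$-algebra. (1) If $\mathcal D$ is minimal, then $(\mathcal D^\downarrow)^\uparrow\cong\mathcal D$. (2) For every congruence $\phi$ of the clone $\tau$-algebra $\mathcal T_\tau$ of $\tau$-terms, $((\mathcal T_\tau/\phi)^\downarrow)^\uparrow\cong\mathcal T_\tau/\phi$. (3) For every t-algebra $\mathbf A$ of type $\tau$, $((\mathbf A^\uparrow)^\downarrow)^\uparrow\cong\mathbf A^\uparrow$.
   Context: $\mathbb N=\{1,2,\dots\}$. A thread on $A$ is $s\in A^{\mathbb N}$; $r[a_1,\dots,a_n]$ is the thread with entries $a_i$ for $i\le n$ and $r_i$ for $i>n$; $r\equiv_{\mathbb N}s$ iff they differ in finitely many places, $[s]_{\mathbb N}$ the class. A trace on $A$ is a nonempty union of $\equiv_{\mathbb N}$-classes. A t-algebra of type $\tau$ and trace $\mathsf a$ is $(A,\mathsf a,\sigma^{\mathbf A})_{\sigma\in\tau}$ with $\sigma^{\mathbf A}:\mathsf a\to A$ arbitrary. Clone $\tau$-algebras: algebras $(C,q_n,\mathsf e_i,\sigma)_{n\ge0,i\ge1,\sigma\in\tau}$ (constants $\mathsf e_i,\sigma$; $q_n$ of arity $n+1$) satisfying (C1) $q_n(\mathsf e_i,\bar x)=x_i$ ($i\le n$); (C2) $q_n(\mathsf e_j,\bar x)=\mathsf e_j$ ($j>n$); (C3) $q_n(x,\mathsf e_1,\dots,\mathsf e_n)=x$; (C4) $q_n(x,\bar y)=q_k(x,\bar y,\mathsf e_{n+1},\dots,\mathsf e_k)$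 ($k>n$); (C5) $q_n(q_n(x,\bar y),\bar z)=q_n(x,q_n(y_1,\bar z),\dots,q_n(y_n,\bar z))$. A clone $\tau$-algebra is minimal if it is generated by its constants $\mathsf e_i$ ($i\ge1$) and $\sigma$ ($\sigma\in\tau$). $\mathcal T_\tau$ denotes the initial clone $\tau$-algebra, whose elements are the $\tau$-terms (least set containing $\mathsf e_1,\mathsf e_2,\dots$ and $\sigma(t_1,\dots,t_n,\mathsf e_{n+1},\mathsf e_{n+2},\dots)$ for $\sigma\in\tau$, $n\ge0$), with $q_n(t,t_1,\dots,t_n)$ the simultaneous substitution of $t_i$ for $\mathsf e_i$ ($i\le n$) in $t$. For a clone $\tau$-algebra $\mathcal C$: $\epsilon^{\mathcal C}=(\mathsf e_1^{\mathcal C},\mathsf e_2^{\mathcal C},\dots)$, $\pmb\epsilon=[\epsilon^{\mathcal C}]_{\mathbb N}$, and for $c\in C$, $\varphi_c:\pmb\epsilon\to C$, $\varphi_c(\epsilon^{\mathcal C}[s_1,\dots,s_n])=q_n^{\mathcal C}(c,s_1,\dots,s_n)$. The t-algebra under $\mathcal C$ is $\mathcal C^\downarrow=(C,\pmb\epsilon,\varphi_{\sigma^{\mathcal C}})_{\sigma\in\tau}$. For a t-algebra $\mathbf A$ of trace $\mathsf a$, the full functional clone $\tau$-algebra has universe all maps $\mathsf a\to A$, $\mathsf e_i(s)=s_i$, $q_n(\varphi,\psi_1,\dots,\psi_n)(s)=\varphi(s[\psi_1(s),\dots,\psi_n(s)])$, $\sigma\mapsto\sigma^{\mathbf A}$;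 the term clone algebra $\mathbf A^\uparrow$ is its minimal subalgebra (the one generated by the constants). *)

From mathcomp Require Import all_boot.
From Stdlib Require Import ClassicalEpsilon.
From Stdlib Require List.

Set Implicit Arguments.
Unset Strict Implicit.
Unset Printing Implicit Defensive.

(* Conventions: everything is 0-based.  The constant e_(i+1) of the paper is
   [ce S i]; a thread s = (s_1, s_2, ...) is a function [s : nat -> A] with
   [s i] = s_(i+1).  A family of operations q_n (n >= 0, arity n+1) is encoded
   by one function [cq : C -> seq C -> C], q_n(x, y_1..y_n) = cq x [:: y_1;..;y_n]. *)

Section Defs.
Variable Sig : Type.

Definition eqvN (A : Type) (r s : nat -> A) : Prop :=
  exists n : nat, forall i, n <= i -> r i = s i.

Definition upd (A : Type) (r : nat -> A) (l : seq A) : nat -> A :=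
  fun i => nth (r i) l i.

Lemma eqvN_upd (A : Type) (r : nat -> A) (l : seq A) : eqvN (upd r l) r.
Proof. exists (size l) => i Hi; rewrite /upd nth_default //. Qed.

Lemma eqvN_refl (A : Type) (r : nat -> A) : eqvN r r.
Proof. by exists 0. Qed.

Lemma eqvN_trans (A : Type) (r s t : nat -> A) : eqvN r s -> eqvN s t -> eqvN r t.
Proof.
move=> [n Hn] [m Hm]; exists (maxn n m) => i Hi.
rewrite Hn ?Hm //; [exact: leq_trans (leq_maxr n m) Hi | exact: leq_trans (leq_maxl n m) Hi].
Qed.

Record t_algebra := TAlgebra {
  tcar : Type;
  trace : (nat -> tcar) -> Prop;
  trace_ne : exists s, trace s;
  trace_closed : forall r s, trace s -> eqvN r s -> trace r;
  top : Sig -> {s : nat -> tcar | trace s} -> tcar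
}.

Record clone_struct := CloneStruct {
  ccar : Type;
  cq : ccar -> seq ccar -> ccar;
  ce : nat -> ccar;
  csig : Sig -> ccar
}.

Definition is_clone_algebra (S : clone_struct) : Prop :=
  (forall i (ys : seq (ccar S)), i < size ys ->
                cq (ce S i) ys = nth (ce S i) ys i) /\
  (forall j (ys : seq (ccar S)), size ys <= j ->
                cq (ce S j) ys = ce S j) /\
  (forall (x : ccar S) n, cq x (mkseq (ce S) n) = x) /\
  (forall (x : ccar S) (ys : seq (ccar S)) k, size ys <= k ->
                cq x ys = cq x (ys ++ map (ce S) (iota (size ys) (k - size ys)))) /\
  (forall (x : ccar S) (ys zs : seq (ccar S)), size ys = size zs ->
                cq (cq x ys) zs = cq x (map (fun y => cq y zs) ys)).

Definition clone_iso (S T : clone_struct) : Prop :=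
  exists f : ccar S -> ccar T,
    bijective f /\
    (forall x ys, f (cq x ys) = cq (f x) (map f ys)) /\
    (forall i, f (ce S i) = ce T i) /\
    (forall s, f (csig S s) = csig T s).

Inductive generated (S : clone_struct) : ccar S -> Prop :=
| gen_e : forall i, generated (ce S i)
| gen_sig : forall s, generated (csig S s)
| gen_q : forall x ys, generated x -> List.Forall (@generated S) ys ->
            generated (cq x ys).

Definition minimal (S : clone_struct) : Prop := forall x : ccar S, @generated S x.

Lemma Forall_map_val (T : Type) (P : T -> Prop) (ys : seq {x | P x}) :
  List.Forall P (map (@proj1_sig _ _) ys).
Proof. elim: ys => [|y ys IH] /=; constructor => //; exact: proj2_sig y. Qed.

Definition sub_gen (S : clone_struct) : clone_struct := {|
  ccar := {x : ccar S | generated x};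
  cq := fun x ys => exist _ (cq (proj1_sig x) (map (@proj1_sig _ _) ys))
                      (gen_q (proj2_sig x) (Forall_map_val ys));
  ce := fun i => exist _ (ce S i) (gen_e S i);
  csig := fun s => exist _ (csig S s) (gen_sig S s) |}.

Definition upd_tr (A : t_algebra) (s : {s : nat -> tcar A | trace s})
    (l : seq (tcar A)) : {s : nat -> tcar A | trace s} :=
  exist _ (upd (proj1_sig s) l)
    (trace_closed (proj2_sig s) (eqvN_upd (proj1_sig s) l)).

Definition full_fun (A : t_algebra) : clone_struct := {|
  ccar := {s : nat -> tcar A | trace s} -> tcar A;
  cq := fun phi psis s => phi (upd_tr s (map (fun psi => psi s) psis));
  ce := fun i s => proj1_sig s i;
  csig := @top A |}.

Definition up (A : t_algebra) : clone_struct := sub_gen (full_fun A).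

Definition eps_trace (D : clone_struct) (s : nat -> ccar D) : Prop :=
  eqvN s (ce D).

Definition phi_op (D : clone_struct) (c : ccar D)
    (s : {s : nat -> ccar D | eps_trace s}) : ccar D :=
  let n := proj1_sig (constructive_indefinite_description
             (fun n => forall i, n <= i -> proj1_sig s i = ce D i) (proj2_sig s)) in
  cq c (mkseq (proj1_sig s) n).

Lemma eps_trace_ne (D : clone_struct) : exists s, @eps_trace D s.
Proof. exists (ce D); exact: eqvN_refl. Qed.

Lemma eps_trace_closed (D : clone_struct) (r s : nat -> ccar D) :
  eps_trace s -> eqvN r s -> eps_trace r.
Proof. move=> Hs Hrs; exact: eqvN_trans Hrs Hs. Qed.

Definition down (D : clone_struct) : t_algebra := {|
  tcar := ccar D;
  trace := @eps_trace D;
  trace_ne := eps_trace_ne D;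
  trace_closed := @eps_trace_closed D;
  top := fun s => phi_op (csig D s) |}.

End Defs.

Inductive term (Sig : Type) : Type :=
| Var : nat -> term Sig                       (* Var i = e_(i+1) *)
| App : Sig -> (nat -> term Sig) -> term Sig. (* App s t = s(t 0, t 1, ...) *)

Arguments Var {Sig} _.

Inductive wf_term (Sig : Type) : term Sig -> Prop :=
| wf_Var : forall i, wf_term (Var i)
| wf_App : forall s (t : nat -> term Sig), (forall i, wf_term (t i)) ->
    (exists n, forall i, n <= i -> t i = Var i) -> wf_term (App s t).

Fixpoint subst (Sig : Type) (ys : seq (term Sig)) (t : term Sig) : term Sig :=
  match t with
  | Var i => nth (Var i) ys i
  | App s f => App s (fun i => subst ys (f i))
  end.

Lemma wf_nth (Sig : Type) (ys : seq (term Sig)) d i :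
  List.Forall (@wf_term Sig) ys -> wf_term d -> wf_term (nth d ys i).
Proof.
elim: ys i => [|y ys IH] [|i] H Hd //=; inversion H; subst; auto.
Qed.

Lemma wf_subst (Sig : Type) (ys : seq (term Sig)) (t : term Sig) :
  List.Forall (@wf_term Sig) ys -> wf_term t -> wf_term (subst ys t).
Proof.
move=> Hys; elim=> [i|s f _ IH [n Hn]] /=.
  by apply: wf_nth => //; constructor.
constructor => //; exists (maxn n (size ys)) => i Hi.
rewrite Hn; last exact: leq_trans (leq_maxl _ _) Hi.
by rewrite /= nth_default //; exact: leq_trans (leq_maxr _ _) Hi.
Qed.

Lemma wf_sig (Sig : Type) (s : Sig) : wf_term (App s Var).
Proof. constructor; [move=> i; constructor | by exists 0]. Qed.

Definition term_clone (Sig : Type) : clone_struct Sig := {|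
  ccar := {t : term Sig | wf_term t};
  cq := fun x ys => exist _ (subst (map (@proj1_sig _ _) ys) (proj1_sig x))
          (wf_subst (Forall_map_val ys) (proj2_sig x));
  ce := fun i => exist _ (Var i) (wf_Var Sig i);
  csig := fun s => exist _ (App s Var) (wf_sig s) |}.

Definition congruence (Sig : Type) (S : clone_struct Sig)
    (R : ccar S -> ccar S -> Prop) : Prop :=
  (forall x, R x x) /\ (forall x y, R x y -> R y x) /\
  (forall x y z, R x y -> R y z -> R x z) /\
  (forall x x' ys ys', R x x' -> List.Forall2 R ys ys' -> R (cq x ys) (cq x' ys')).

Section Quotient.
Variables (Sig : Type) (S : clone_struct Sig) (R : ccar S -> ccar S -> Prop).

Definition qclass := {P : ccar S -> Prop | exists x, P = R x}.
Definition cls (x : ccar S) : qclass := exist _ (R x) (ex_intro _ x erefl).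
Definition repr (c : qclass) : ccar S :=
  proj1_sig (constructive_indefinite_description _ (proj2_sig c)).

Definition quotient : clone_struct Sig := {|
  ccar := qclass;
  cq := fun c cs => cls (cq (repr c) (map repr cs));
  ce := fun i => cls (ce S i);
  csig := fun s => cls (csig S s) |}.
End Quotient.

From Pilot Require Import Defs.
From mathcomp Require Import all_boot.
From Stdlib Require List.
From Stdlib Require Import FunctionalExtensionality ProofIrrelevance.
From Stdlib Require Import PropExtensionality ClassicalEpsilon.

Set Implicit Arguments.
Unset Strict Implicit.

(* The heart of the matter is part (1).  For a clone algebra D, the t-algebra
   D^down has as operations the maps phi_c : s |-> q_n(c, s_1, ..., s_n), and
   every function psi in the generated clone (D^down)^up is determined by its
   value at the thread epsilon = (e_1, e_2, ...): psi = phi_(psi epsilon).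
   Hence evaluation at epsilon is an injective homomorphism (D^down)^up -> D,
   and it is onto because D is generated by its constants.
   Parts (2) and (3) are instances of (1): the quotient T_tau/phi is the image
   of the minimal clone algebra T_tau of terms under a surjective homomorphism,
   and surjective homomorphisms preserve both the clone axioms and minimality;
   A^up is the subalgebra of the full functional clone algebra (a clone
   algebra) generated by the constants, hence a minimal clone algebra. *)

Lemma sig_eq (A : Type) (P : A -> Prop) (x y : {a | P a}) :
  proj1_sig x = proj1_sig y -> x = y.
Proof. by apply: eq_sig_hprop => a; exact: proof_irrelevance. Qed.

(* Induction on [generated], with the induction hypothesis available on every
   argument of a composite q_n(x, ys); Rocq only derives the weaker principle. *)
Section GeneratedInduction.
Variables (Sig : Type) (S : clone_struct Sig) (P : ccar S -> Prop).
Hypotheses (P_e : forall i, P (ce S i)) (P_sig : forall s, P (csig S s))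
  (P_q : forall x ys, P x -> List.Forall P ys -> P (cq x ys)).

Fixpoint generated_rect (x : ccar S) (H : generated x) {struct H} : P x :=
  match H with
  | gen_e i => P_e i
  | gen_sig s => P_sig s
  | gen_q x ys Hx Hys => P_q (generated_rect Hx)
      ((fix all (l : seq (ccar S)) (h : List.Forall (@generated _ S) l) :
           List.Forall P l :=
         match h with
         | List.Forall_nil => List.Forall_nil _
         | List.Forall_cons y l hy hl =>
             List.Forall_cons _ (generated_rect hy) (all l hl)
         end) ys Hys)
  end.
End GeneratedInduction.

Lemma Forall_image (A B : Type) (f : A -> B) (l : seq B) :
  List.Forall (fun y => exists x, f x = y) l -> exists l0, map f l0 = l.
Proof.
elim=> [|y l' [x <-] _ [l0 <-]]; first by exists [::].
by exists (x :: l0).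
Qed.

Lemma surj_map (A B : Type) (f : A -> B) (l : seq B) :
  (forall y, exists x, f x = y) -> exists l0, map f l0 = l.
Proof. by move=> f_onto; apply: Forall_image; apply/List.Forall_forall. Qed.

Lemma Forall_mkseq (T : Type) (P : T -> Prop) (f : nat -> T) n :
  (forall i, P (f i)) -> List.Forall P (mkseq f n).
Proof. by move=> Pf; apply/List.Forall_forall => x /List.in_map_iff [i [<- _]]. Qed.

(* Padding l with the items d (size l), d (size l + 1), ... does not change
   its i-th item when d i is the default; this is the content of axiom (C4). *)
Lemma nth_pad (T : Type) (d : nat -> T) (l : seq T) m i :
  nth (d i) (l ++ map d (iota (size l) m)) i = nth (d i) l i.
Proof.
rewrite nth_cat; case: ltnP => // le_l_i.
rewrite (nth_default (d i) le_l_i).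
case: (ltnP (i - size l) m) => H.
  by rewrite (nth_map 0) ?size_iota // nth_iota // subnKC.
by rewrite nth_default // size_map size_iota.
Qed.

Definition clone_hom (Sig : Type) (S T : clone_struct Sig) (f : ccar S -> ccar T) :=
  (forall x ys, f (cq x ys) = cq (f x) (map f ys)) /\
  (forall i, f (ce S i) = ce T i) /\ (forall s, f (csig S s) = csig T s).

Section Homomorphisms.
Variables (Sig : Type) (S T : clone_struct Sig) (f : ccar S -> ccar T).
Hypothesis f_hom : clone_hom f.

(* The clone axioms are equations, so they pass to homomorphic images. *)
Lemma surj_hom_clone :
  (forall y, exists x, f x = y) -> is_clone_algebra S -> is_clone_algebra T.
Proof.
move: f_hom => [f_q [f_e _]] f_onto [C1 [C2 [C3 [C4 C5]]]].
have f_map_ce l : map f (map (ce S) l) = map (ce T) l.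
  by rewrite -map_comp; apply: eq_map => i /=.
split; [|split; [|split; [|split]]].
- move=> i ys'; have [ys <-] := surj_map ys' f_onto; rewrite size_map => Hi.
  by rewrite -f_e -f_q C1 // (nth_map (ce S i)).
- move=> j ys'; have [ys <-] := surj_map ys' f_onto; rewrite size_map => Hj.
  by rewrite -f_e -f_q C2.
- by move=> x' n; have [x <-] := f_onto x'; rewrite /mkseq -f_map_ce -f_q C3.
- move=> x' ys' k; have [x <-] := f_onto x'; have [ys <-] := surj_map ys' f_onto.
  by rewrite size_map => Hk; rewrite -f_q (C4 x ys k Hk) f_q map_cat f_map_ce.
- move=> x' ys' zs'; have [x <-] := f_onto x'; have [ys <-] := surj_map ys' f_onto.
  have [zs <-] := surj_map zs' f_onto; rewrite !size_map => Hsz.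
  rewrite -!f_q C5 // f_q -!map_comp; congr cq; apply: eq_map => y /=.
  by rewrite f_q.
Qed.

Lemma hom_generated x : generated x -> generated (f x).
Proof.
move: f_hom => [f_q [f_e f_sig]].
elim/generated_rect => [i|s|{}x ys gen_fx gen_fys].
- by rewrite f_e; exact: gen_e.
- by rewrite f_sig; exact: gen_sig.
- rewrite f_q; apply: gen_q => //.
  by elim: gen_fys => [|z zs Hz _ IH] /=; constructor.
Qed.

Lemma surj_hom_minimal : (forall y, exists x, f x = y) -> minimal S -> minimal T.
Proof. by move=> f_onto S_min y; have [x <-] := f_onto y; exact: hom_generated. Qed.

(* The image of a homomorphism contains all constants and is closed under the
   q_n, so it is everything when the target is minimal. *)
Lemma hom_onto_minimal : minimal T -> forall y, exists x, f x = y.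
Proof.
move: f_hom => [f_q [f_e f_sig]] T_min y.
elim/generated_rect: y / (T_min y) => [i|s|y ys [x <-] ys_img].
- by exists (ce S i).
- by exists (csig S s).
- by have [l <-] := Forall_image ys_img; exists (cq x l); rewrite f_q.
Qed.

Lemma bijective_hom_iso :
  injective f -> (forall y, exists x, f x = y) -> clone_iso S T.
Proof.
move=> f_inj f_onto; exists f; split => //.
pose g y := proj1_sig (constructive_indefinite_description _ (f_onto y)).
have fgK : cancel g f.
  by move=> y; rewrite /g; case: (constructive_indefinite_description _ _).
by exists g => // x; apply: f_inj; rewrite fgK.
Qed.
End Homomorphisms.

(* Equations true in S remain true in the subalgebra generated by the constants. *)
Lemma sub_gen_clone (Sig : Type) (S : clone_struct Sig) :
  is_clone_algebra S -> is_clone_algebra (sub_gen S).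
Proof.
move=> [C1 [C2 [C3 [C4 C5]]]].
have val_map_ce l : map (@proj1_sig _ _) (map (ce (sub_gen S)) l) = map (ce S) l.
  by rewrite -map_comp; apply: eq_map => i /=.
split; [|split; [|split; [|split]]].
- move=> i ys Hi; apply: sig_eq => /=; rewrite C1 ?size_map //.
  by rewrite (nth_map (ce (sub_gen S) i)).
- by move=> j ys Hj; apply: sig_eq => /=; rewrite C2 ?size_map.
- by move=> x n; apply: sig_eq => /=; rewrite /mkseq val_map_ce C3.
- move=> x ys k Hk; apply: sig_eq => /=; rewrite map_cat val_map_ce.
  by rewrite -(size_map (@proj1_sig _ _) ys) -C4 // size_map.
- move=> x ys zs Hsz; apply: sig_eq => /=; rewrite C5 ?size_map // -!map_comp.
  by congr cq; apply: eq_map.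
Qed.

(* Every element x of S generated by the constants of S is, as an element of
   sub_gen S, generated by the constants of sub_gen S (whatever the proof
   that x is generated). *)
Lemma sub_gen_minimal (Sig : Type) (S : clone_struct Sig) : minimal (sub_gen S).
Proof.
pose lifts x := forall H, generated (exist (@generated _ S) x H : ccar (sub_gen S)).
suff gen_lifts x : generated x -> generated x /\ lifts x.
  by move=> [x Hx]; exact: (proj2 (gen_lifts x Hx)).
elim/generated_rect => [i|s|{}x ys [gen_x x_lifts] ys_lift]; split.
- exact: gen_e.
- move=> H; have -> : exist _ (ce S i) H = ce (sub_gen S) i by apply: sig_eq.
  exact: gen_e.
- exact: gen_sig.
- move=> H; have -> : exist _ (csig S s) H = csig (sub_gen S) s by apply: sig_eq.
  exact: gen_sig.
- by apply: gen_q => //; elim: ys_lift => [|y l [] *]; constructor.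
- have [ys' [val_ys' gen_ys']] : exists ys' : seq (ccar (sub_gen S)),
      map (@proj1_sig _ _) ys' = ys /\ List.Forall (@generated _ _) ys'.
    elim: ys_lift => [|y l [gen_y y_lifts] _ [l' [val_l' gen_l']]].
      by exists [::].
    exists (exist _ y gen_y :: l'); rewrite /= val_l'.
    by split => //; constructor => //; exact: y_lifts.
  move=> H; have -> : exist _ (cq x ys) H = cq (exist _ x gen_x : ccar (sub_gen S)) ys'.
    by apply: sig_eq; rewrite /= val_ys'.
  by apply: gen_q => //; exact: x_lifts.
Qed.

Lemma upd_upd (A : Type) (s : nat -> A) l1 l2 :
  size l1 = size l2 -> upd (upd s l1) l2 = upd s l2.
Proof.
move=> eq_size; apply: functional_extensionality => i; rewrite /upd.
case: (ltnP i (size l2)) => Hi; first exact: set_nth_default.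
by rewrite !nth_default // eq_size.
Qed.

Lemma full_fun_clone (Sig : Type) (A : t_algebra Sig) : is_clone_algebra (full_fun A).
Proof.
split; [|split; [|split; [|split]]].
- move=> i ys Hi; apply: functional_extensionality => s /=.
  by rewrite /upd (nth_map (ce (full_fun A) i)).
- move=> j ys Hj; apply: functional_extensionality => s /=.
  by rewrite /upd nth_default // size_map.
- move=> x n; apply: functional_extensionality => s /=; congr x; apply: sig_eq => /=.
  apply: functional_extensionality => i; rewrite /upd /mkseq -map_comp /=.
  case: (ltnP i n) => Hi; first by rewrite (nth_map 0) ?size_iota // nth_iota.
  by rewrite nth_default // size_map size_iota.
- move=> x ys k Hk; apply: functional_extensionality => s /=; congr x.
  apply: sig_eq; apply: functional_extensionality => i /=.
  by rewrite /upd map_cat -map_comp -(size_map (fun psi => psi s) ys) nth_pad.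
- move=> x ys zs Hsz; apply: functional_extensionality => s /=; congr x.
  by apply: sig_eq; rewrite /= upd_upd ?size_map // -map_comp.
Qed.

Lemma subst_id (Sig : Type) n (t : term Sig) : subst (mkseq Var n) t = t.
Proof.
elim: t => [i|s f IH] /=.
  case: (ltnP i n) => Hi; first by rewrite nth_mkseq.
  by rewrite nth_default // size_mkseq.
by congr App; apply: functional_extensionality.
Qed.

Lemma subst_pad (Sig : Type) (l : seq (term Sig)) m t :
  subst (l ++ map Var (iota (size l) m)) t = subst l t.
Proof.
elim: t => [i|s f IH] /=; first by rewrite nth_pad.
by congr App; apply: functional_extensionality.
Qed.

Lemma subst_comp (Sig : Type) (l1 l2 : seq (term Sig)) t :
  size l1 = size l2 -> subst l2 (subst l1 t) = subst (map (subst l2) l1) t.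
Proof.
move=> eq_size; elim: t => [i|s f IH] /=.
  case: (ltnP i (size l1)) => Hi; first by rewrite (nth_map (Var i)).
  by rewrite !nth_default ?size_map //= nth_default // -eq_size.
by congr App; apply: functional_extensionality.
Qed.

Lemma term_clone_clone (Sig : Type) : is_clone_algebra (term_clone Sig).
Proof.
have val_map_ce l : map (@proj1_sig _ _) (map (ce (term_clone Sig)) l) = map Var l.
  by rewrite -map_comp; apply: eq_map => i /=.
split; [|split; [|split; [|split]]].
- move=> i ys Hi; apply: sig_eq => /=.
  by rewrite (nth_map (ce (term_clone Sig) i)).
- by move=> j ys Hj; apply: sig_eq => /=; rewrite nth_default ?size_map.
- by move=> x n; apply: sig_eq => /=; rewrite /mkseq val_map_ce subst_id.
- move=> x ys k Hk; apply: sig_eq => /=; rewrite map_cat val_map_ce.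
  by rewrite -(size_map (@proj1_sig _ _) ys) subst_pad.
- move=> x ys zs Hsz; apply: sig_eq => /=; rewrite subst_comp ?size_map // -!map_comp.
  by congr subst; apply: eq_map.
Qed.

(* A term s(t_1, ..., t_n, e_(n+1), ...) is q_n(s, t_1, ..., t_n). *)
Lemma term_clone_minimal (Sig : Type) : minimal (term_clone Sig).
Proof.
suff gen_wf t : wf_term t ->
    forall w : wf_term t, generated (exist _ t w : ccar (term_clone Sig)).
  by move=> [t w]; exact: gen_wf.
elim=> [i|s f wf_f IH [n f_var]] w.
- have -> : exist _ (Var i) w = ce (term_clone Sig) i by apply: sig_eq.
  exact: gen_e.
- pose ys := mkseq (fun i => exist _ (f i) (wf_f i) : ccar (term_clone Sig)) n.
  have -> : exist _ (App s f) w = cq (csig (term_clone Sig) s) ys.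
    apply: sig_eq => /=; congr App; apply: functional_extensionality => i.
    rewrite /ys /mkseq -map_comp /=.
    case: (ltnP i n) => Hi; first by rewrite (nth_map 0) ?size_iota // nth_iota.
    by rewrite nth_default ?size_map ?size_iota // f_var.
  by apply: gen_q; [exact: gen_sig | exact: Forall_mkseq].
Qed.

Section Quotients.
Variables (Sig : Type) (S : clone_struct Sig) (R : ccar S -> ccar S -> Prop).
Hypothesis R_cong : congruence R.

Lemma cls_eq a b : R a b -> cls R a = cls R b.
Proof.
move: R_cong => [_ [R_sym [R_trans _]]] Rab; apply: sig_eq => /=.
apply: functional_extensionality => z; apply: propositional_extensionality.
by split => [Raz | Rbz]; [apply: R_trans Raz; exact: R_sym | exact: R_trans Rab Rbz].
Qed.

Lemma repr_cls a : R a (Defs.repr (cls R a)).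
Proof.
move: R_cong => [R_refl _]; rewrite /Defs.repr.
case: (constructive_indefinite_description _ _) => y /= E.
by rewrite E; exact: R_refl.
Qed.

Lemma cls_repr c : cls R (Defs.repr c) = c.
Proof.
apply: sig_eq; rewrite /Defs.repr /=.
by case: (constructive_indefinite_description _ _).
Qed.

Lemma cls_hom : clone_hom (T := quotient R) (cls R).
Proof.
move: R_cong => [_ [_ [_ R_q]]]; split; [|split] => // x ys /=.
apply: cls_eq; apply: R_q; first exact: repr_cls.
by rewrite -map_comp; elim: ys => [|y l IH] /=; constructor => //; exact: repr_cls.
Qed.

Lemma cls_onto (c : ccar (quotient R)) : exists x, cls R x = c.
Proof. by exists (Defs.repr c); exact: cls_repr. Qed.
End Quotients.

Section Representation.
Variables (Sig : Type) (D : clone_struct Sig).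
Hypothesis D_clone : is_clone_algebra D.

Local Notation thread := {s : nat -> ccar D | eps_trace s}.

Definition eps_thread : thread := exist (@eps_trace _ D) (ce D) (eqvN_refl (ce D)).

Lemma cq_mkseq_pad (c : ccar D) (s : nat -> ccar D) n k :
  (forall i, n <= i -> s i = ce D i) -> n <= k ->
  cq c (mkseq s k) = cq c (mkseq s n).
Proof.
move: D_clone => [_ [_ [_ [C4 _]]]] s_eps le_nk.
rewrite (C4 c (mkseq s n) k) ?size_mkseq //.
rewrite /mkseq -(subnKC le_nk) iotaD map_cat add0n subnKC //.
congr (cq c (_ ++ _)); apply/eq_in_map => i; rewrite mem_iota => /andP [Hi _].
exact: s_eps.
Qed.

Lemma phi_opE (c : ccar D) (s : thread) m :
  (forall i, m <= i -> proj1_sig s i = ce D i) ->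
  phi_op c s = cq c (mkseq (proj1_sig s) m).
Proof.
move=> s_eps; rewrite /phi_op; case: (constructive_indefinite_description _ _) => n Hn /=.
rewrite -(@cq_mkseq_pad c _ n (maxn n m)) ?leq_maxl //.
by rewrite (@cq_mkseq_pad c _ m (maxn n m)) ?leq_maxr.
Qed.

Lemma phi_op_eps c : phi_op c eps_thread = c.
Proof. by move: D_clone => [_ [_ [C3 _]]]; rewrite (@phi_opE c eps_thread 0) // C3. Qed.

Lemma phi_op_upd_eps c ds : phi_op c (upd_tr (A := down D) eps_thread ds) = cq c ds.
Proof.
rewrite (@phi_opE c _ (size ds)) /=; last by move=> i Hi; rewrite /upd nth_default.
congr cq; apply: (@eq_from_nth _ (ce D 0)); rewrite size_mkseq // => i Hi.
by rewrite nth_mkseq // /upd (set_nth_default (ce D 0)).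
Qed.

Lemma phi_op_ce i (s : thread) : phi_op (ce D i) s = proj1_sig s i.
Proof.
move: D_clone => [C1 _]; case: (proj2_sig s) => m s_eps.
have le_i_k : i < maxn m i.+1 by rewrite leq_max ltnSn orbT.
rewrite (@phi_opE _ s (maxn m i.+1)); last first.
  by move=> j Hj; apply: s_eps; exact: leq_trans (leq_maxl _ _) Hj.
by rewrite C1 ?size_mkseq // nth_mkseq.
Qed.

Lemma phi_op_cq c ds (s : thread) :
  phi_op c (upd_tr (A := down D) s (map (fun d => phi_op d s) ds)) =
  phi_op (cq c ds) s.
Proof.
move: D_clone => [C1 [_ [_ [C4 C5]]]]; case: (proj2_sig s) => m s_eps.
set k := maxn m (size ds).
have le_ds_k : size ds <= k by exact: leq_maxr.
have s_eps_k i : k <= i -> proj1_sig s i = ce D i.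
  by move=> Hi; apply: s_eps; exact: leq_trans (leq_maxl _ _) Hi.
rewrite (@phi_opE _ s k) // (@phi_opE _ _ k); last first.
  move=> i Hi; rewrite /= /upd nth_default ?size_map ?s_eps_k //.
  exact: leq_trans le_ds_k Hi.
rewrite (C4 c ds k le_ds_k) C5; last by rewrite size_cat size_map size_iota size_mkseq subnKC.
congr cq; apply: (@eq_from_nth _ (ce D 0)).
  by rewrite size_map size_cat size_map size_iota size_mkseq subnKC.
rewrite size_mkseq => i Hi; rewrite nth_mkseq // (nth_map (ce D i)); last first.
  by rewrite size_cat size_map size_iota subnKC.
rewrite nth_pad /= /upd; case: (ltnP i (size ds)) => Hds.
  by rewrite (nth_map (ce D i)) // (phi_opE _ s_eps_k).
by rewrite !nth_default ?size_map // C1 ?size_mkseq // nth_mkseq.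
Qed.

Lemma generated_phi_op (psi : ccar (full_fun (down D))) :
  generated psi -> forall s, psi s = phi_op (psi eps_thread) s.
Proof.
move=> gen_psi; elim/generated_rect: psi / gen_psi => [i|sg|x ys x_phi ys_phi] s /=.
- by rewrite phi_op_ce.
- by rewrite phi_op_eps.
- have -> : map (fun y => y s) ys =
            map (fun d => phi_op d s) (map (fun y => y eps_thread) ys).
    by rewrite -map_comp; elim: ys_phi => [|y l y_phi _ IH] //=; rewrite y_phi IH.
  by rewrite x_phi phi_op_cq [in RHS]x_phi phi_op_upd_eps.
Qed.

Definition eval_eps (psi : ccar (up (down D))) : ccar D := proj1_sig psi eps_thread.

Lemma eval_eps_hom : clone_hom eval_eps.
Proof.
split; [|split] => // [[x gen_x] ys | s]; rewrite /eval_eps /=.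
  by rewrite (generated_phi_op gen_x) -map_comp phi_op_upd_eps.
exact: phi_op_eps.
Qed.

Lemma eval_eps_inj : injective eval_eps.
Proof.
move=> [x gen_x] [y gen_y]; rewrite /eval_eps /= => E; apply: sig_eq.
apply: functional_extensionality => s /=.
by rewrite (generated_phi_op gen_x) (generated_phi_op gen_y) E.
Qed.

Theorem up_down_iso : minimal D -> clone_iso (up (down D)) D.
Proof.
move=> D_min; apply: (bijective_hom_iso eval_eps_hom eval_eps_inj).
exact: hom_onto_minimal eval_eps_hom D_min.
Qed.
End Representation.

Theorem mainTheorem5 (Sig : Type) :
  (* (1) *)
  (forall D : clone_struct Sig,
     is_clone_algebra D -> minimal D -> clone_iso (up (down D)) D) /\
  (* (2) *)
  (forall phi : ccar (term_clone Sig) -> ccar (term_clone Sig) -> Prop,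
     congruence phi ->
     clone_iso (up (down (quotient phi))) (quotient phi)) /\
  (* (3) *)
  (forall A : t_algebra Sig, clone_iso (up (down (up A))) (up A)).
Proof.
split; [|split].
- exact: up_down_iso.
- move=> phi phi_cong; apply: up_down_iso.
  + exact: surj_hom_clone (cls_hom phi_cong) (@cls_onto _ _ phi) (term_clone_clone Sig).
  + exact: surj_hom_minimal (cls_hom phi_cong) (@cls_onto _ _ phi) (@term_clone_minimal Sig).
- move=> A; apply: up_down_iso.
  + exact: sub_gen_clone (full_fun_clone A).
  + exact: sub_gen_minimal.
Qed.
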